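(* With $E^\star_{as}(M,B)$ and $E^\infty_{\rm No\text{-}HARQ}$ as defined below, $$\lim_{M\to\infty}E^\star_{as}(M,B)=\int_0^{E^\infty_{\rm No\text{-}HARQ}}Q\!\left(\frac{E-B\ln 2}{\sqrt{2E}}\right)\mathrm{d}E.$$
   Context: Fix $B>0$ and $T_{\rm rel}\in(0,1)$. Let $Q(x)=\frac{1}{\sqrt{2\pi}}\int_x^\infty e^{-t^2/2}\,dt$. Define $$E^\infty_{\rm No\text{-}HARQ}=\frac{\big(Q^{-1}(1-T_{\rm rel})\big)^2}{2}\left(1+\sqrt{1+\frac{2B\ln 2}{\big(Q^{-1}(1-T_{\rm rel})\big)^2}}\right)^2,$$ and for $M\ge1$, $$E^\star_{as}(M,B)=\min\Big\{E_1+\sum_{m=2}^M Q\!\left(\frac{\sum_{i=1}^{m-1}E_i-B\ln 2}{\sqrt{2\sum_{i=1}^{m-1}E_i}}\right)E_m\;:\;E_1,\dots,E_M\ge0,\ \sum_{m=1}^M E_m=E^\infty_{\rm No\text{-}HARQ}\Big\},$$ where $Q(\cdot)$ at zero cumulative energy is interpreted as $1$. (This is the limit, as the latency budget tends to infinity, of the minimum average energy of an IR-HARQ scheme with $M$ rounds.) *)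

From Stdlib Require Import Reals Lra ClassicalEpsilon.
Open Scope R_scope.

(* Riemann integral of f over [a,b] (value of RiemannInt, which does not depend
   on the integrability proof); 0 if f is not Riemann integrable. *)
Definition RInt (f : R -> R) (a b : R) : R :=
  epsilon (inhabits 0)
    (fun I => exists pr : Riemann_integrable f a b, RiemannInt pr = I).

Definition improper_lim (f : R -> R) (x l : R) : Prop :=
  forall eps, 0 < eps -> exists b0, forall b, b0 <= b -> Rabs (RInt f x b - l) < eps.

Definition Qfun (x : R) : R :=
  / sqrt (2 * PI) *
  epsilon (inhabits 0) (improper_lim (fun t => exp (- (t ^ 2) / 2)) x).

(* Inverse of Q (Q is a bijection R -> (0,1)) *)
Definition Qinv (y : R) : R := epsilon (inhabits 0) (fun x => Qfun x = y).

Definition Einf (B Trel : R) : R :=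
  let q := Qinv (1 - Trel) in
  (q ^ 2 / 2) * (1 + sqrt (1 + 2 * B * ln 2 / q ^ 2)) ^ 2.

(* Q((S - B ln 2)/sqrt(2 S)) as a function of the cumulative energy S,
   with the convention that it equals 1 at zero cumulative energy. *)
Definition Qcum (B S : R) : R :=
  if Rle_dec S 0 then 1 else Qfun ((S - B * ln 2) / sqrt (2 * S)).

Fixpoint rsum (f : nat -> R) (n : nat) : R :=
  match n with
  | O => 0
  | S k => rsum f k + f (S k)
  end.

Definition feasible (M : nat) (Etot : R) (E : nat -> R) : Prop :=
  (forall i, (1 <= i <= M)%nat -> 0 <= E i) /\ rsum E M = Etot.

Definition avg_energy (B : R) (M : nat) (E : nat -> R) : R :=
  E 1%nat + rsum (fun m => if Nat.leb m 1 then 0 else Qcum B (rsum E (m - 1)) * E m) M.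

Definition Eas (M : nat) (B Trel : R) : R :=
  epsilon (inhabits 0) (fun v =>
    (exists E, feasible M (Einf B Trel) E /\ avg_energy B M E = v) /\
    (forall E, feasible M (Einf B Trel) E -> v <= avg_energy B M E)).

(* Writing [f S = Q ((S - B ln 2) / sqrt (2 S))] (with [f S = 1] for [S <= 0]), the
   objective of an allocation [E_1, ..., E_M] is the left Riemann sum
   [sum_m f (E_1 + ... + E_(m-1)) E_m] of [f] on the partition of [[0, Einf]] cut by the
   cumulative energies.  Since [f] is continuous and nonincreasing, every such sum
   dominates [int_0^Einf f], while the uniform allocation [E_m = Einf / M] exceeds it by
   at most [Einf (f 0 - f Einf) / M].  The minimum exists by compactness of the simplex,
   so it is squeezed to the integral.  That [Q] is well defined, continuous, at most [1]
   and tends to [1] at [-oo] comes from the Gaussian integral [int_0^oo exp (- x ^ 2) =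
   sqrt pi / 2], taken from mathcomp-analysis. *)

From Stdlib Require Import Reals Lra Lia ClassicalEpsilon.
From mathcomp Require all_boot all_order all_algebra all_classical all_reals all_analysis.
From mathcomp Require Rstruct Rstruct_topology.
Open Scope R_scope.

Section ContinuousIntegral.
Variable f : R -> R.
Hypothesis f_cont : forall x, continuity_pt f x.

Lemma Riemann_integrable_cont a b : Riemann_integrable f a b.
Proof.
destruct (Rle_dec a b).
- apply continuity_implies_RiemannInt; auto.
- apply RiemannInt_P1, continuity_implies_RiemannInt; auto; lra.
Qed.

Lemma RInt_RiemannInt a b : RInt f a b = RiemannInt (Riemann_integrable_cont a b).
Proof.
unfold RInt.
destruct (epsilon_spec (inhabits 0)
            (fun I => exists pr : Riemann_integrable f a b, RiemannInt pr = I))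
  as [pr <-].
- exists (RiemannInt (Riemann_integrable_cont a b)), (Riemann_integrable_cont a b).
  reflexivity.
- apply RiemannInt_P5.
Qed.

Lemma RInt_Chasles a b c : RInt f a b + RInt f b c = RInt f a c.
Proof. rewrite !RInt_RiemannInt. apply RiemannInt_P26. Qed.

Lemma RInt_point a : RInt f a a = 0.
Proof. rewrite RInt_RiemannInt. apply RiemannInt_P9. Qed.

Lemma RInt_const_bound a b l u : a <= b -> (forall x, a < x < b -> l <= f x <= u) ->
  l * (b - a) <= RInt f a b <= u * (b - a).
Proof. intros. rewrite RInt_RiemannInt. apply RiemannInt_const_bound; auto. Qed.

Lemma derivable_pt_lim_RInt a x : derivable_pt_lim (fun y => RInt f a y) x (f x).
Proof.
assert (le : x - 1 <= x + 1) by lra.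
assert (C : forall y, x - 1 <= y <= x + 1 -> continuity_pt f y) by auto.
apply (derivable_pt_lim_locally_ext
         (fun y => RInt f a (x - 1) + primitive le (FTC_P1 le C) y) _ x (x - 1) (x + 1));
  [lra | |].
- intros y Hy. unfold primitive.
  destruct (Rle_dec (x - 1) y); [|lra]. destruct (Rle_dec y (x + 1)); [|lra].
  rewrite <- (RInt_Chasles a (x - 1) y), (RInt_RiemannInt (x - 1) y).
  f_equal. apply RiemannInt_P5.
- rewrite <- (Rplus_0_l (f x)).
  apply derivable_pt_lim_plus; [apply derivable_pt_lim_const | apply RiemannInt_P27; lra].
Qed.

End ContinuousIntegral.

Definition gauss_kernel t := exp (- (t ^ 2) / 2).

Lemma gauss_kernel_cont x : continuity_pt gauss_kernel x.
Proof. unfold gauss_kernel. reg. Qed.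

Lemma gauss_kernel_pos x : 0 < gauss_kernel x.
Proof. apply exp_pos. Qed.

Lemma gauss_kernel_le1 x : gauss_kernel x <= 1.
Proof.
unfold gauss_kernel. rewrite <- exp_0.
assert (H : - (x ^ 2) / 2 <= 0) by (assert (0 <= x ^ 2) by apply pow2_ge_0; lra).
destruct H as [H | ->]; [left; apply exp_increasing, H | right; reflexivity].
Qed.

Definition Phi x := RInt gauss_kernel 0 x.

Lemma Phi_derive x : derivable_pt_lim Phi x (gauss_kernel x).
Proof. apply derivable_pt_lim_RInt, gauss_kernel_cont. Qed.

Lemma Phi_0 : Phi 0 = 0.
Proof. apply RInt_point, gauss_kernel_cont. Qed.

Lemma RInt_gauss a b : RInt gauss_kernel a b = Phi b - Phi a.
Proof. unfold Phi. rewrite <- (RInt_Chasles gauss_kernel gauss_kernel_cont 0 a b). ring. Qed.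

Lemma Phi_incr a b : a <= b -> Phi a <= Phi b.
Proof.
intros ab.
destruct (RInt_const_bound gauss_kernel gauss_kernel_cont a b 0 1 ab) as [H _].
- intros x _. split; [left; apply gauss_kernel_pos | apply gauss_kernel_le1].
- rewrite RInt_gauss in H. lra.
Qed.

Lemma gauss_kernel_scaled c x : c * c = 2 -> gauss_kernel (c * x) = exp (- x ^ 2).
Proof.
intros Hc. unfold gauss_kernel. f_equal.
replace ((c * x) ^ 2) with (c * c * x ^ 2) by ring. rewrite Hc. field.
Qed.

Module Gauss.
Import all_boot all_order all_algebra all_classical all_reals all_analysis.
Import Rstruct Rstruct_topology.
Import Order.TTheory GRing.Theory Num.Theory numFieldNormedType.Exports.
Local Open Scope classical_set_scope.
Local Open Scope ring_scope.

Lemma RcosE (x : R) : Rtrigo_def.cos x = cos x.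
Proof.
apply/esym; rewrite -(cvg_lim (@Rhausdorff R) (@cvg_cos_coeff' R x)).
apply: (@cvg_lim R^o) => //.
rewrite /Rtrigo_def.cos; case: exist_cos => y.
rewrite /cos_in /infinite_sum => H.
rewrite -cvg_shiftS /=; apply/cvgrPdist_lt => /= e /RltP /H[N HN].
near=> n.
have nN : (n >= N)%coq_nat by apply/ssrnat.leP; near: n; exact: nbhs_infty_ge.
move: HN => /(_ _ nN) /[!RdistE] /RltP /=.
rewrite distrC sum_f_R0E; congr (`| _ - _ | < e).
apply: eq_bigr => k _.
rewrite /cos_n /cos_coeff' RdivE RpowE INRE factE.
have -> : Rsqr x = x ^+ 2 by rewrite expr2.
rewrite RpowE -exprM -exprnP (_ : (2 * k)%coq_nat = k.*2); last by rewrite -mul2n.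
by rewrite [in RHS]mulrC mulrA RmultE mul2n [X in X * _]mulrC.
Unshelve. all: by end_near. Qed.

(* Whichever of [pi / 2] and [PI / 2] were smaller would be a point where the
   cosine vanishes and, by the other library's positivity lemma, is positive. *)
Lemma RPIE : PI = pi.
Proof.
have pi2_gt0 : 0 < pi / 2 :> R by rewrite divr_gt0 // pi_gt0.
have /RltP PI2_gt0 := PI2_RGT_0.
suff : pi / 2 = PI / 2 by move/(congr1 ( *%R^~ 2)); rewrite !divfK.
have [lt|lt|//] := ltgtP (pi / 2) (PI / 2).
- have /RltP : (0 < Rtrigo_def.cos (pi / 2))%coqR.
    by apply: cos_gt_0; apply/RltP => //; apply: lt_trans pi2_gt0; rewrite oppr_lt0.
  by rewrite RcosE cos_pihalf ltxx.
- have : 0 < cos (PI / 2).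
    by apply: cos_gt0_pihalf; rewrite lt (lt_trans _ PI2_gt0) // oppr_lt0.
  by rewrite -RcosE cos_PI2 ltxx.
Qed.

Section realType.
Context {R : realType}.

Lemma is_derive_quotient (F : R -> R) x l :
  (forall e, 0 < e -> exists2 d, 0 < d & forall h, h != 0 -> `|h| < d ->
     `|(F (x + h) - F x) / h - l| < e) ->
  is_derive x 1 F l.
Proof.
move=> dF.
have : (fun h : R => h^-1 *: ((F \o shift x) (h *: 1) - F x)) @ 0^' --> l.
  apply/cvgrPdist_lt => e /dF [d d_gt0 Hd].
  exists d => //= h /= hd h_neq0.
  rewrite distrC (_ : h%:A = h); last by rewrite /GRing.scale /= mulr1.
  rewrite (_ : h^-1 *: _ = h^-1 * (F (h + x) - F x)) // (addrC h) mulrC.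
  by apply: Hd => //; move: hd; rewrite sub0r normrN.
by move=> cvgF; apply: DeriveDef; [apply/cvg_ex; exists l | exact: cvg_lim].
Qed.

(* Derivatives are given as limits of difference quotients: [is_derive] cannot be
   instantiated directly at Stdlib's [R]. *)
Lemma integral0_gauss_eq (F : R -> R) :
  F 0 = 0 ->
  (forall x e, 0 < e -> exists2 d, 0 < d & forall h, h != 0 -> `|h| < d ->
     `|(F (x + h) - F x) / h - gauss_fun x| < e) ->
  forall y, 0 < y -> F y = gauss_integral_proof.integral0_gauss y.
Proof.
move=> F0 dF y y_gt0.
have {}dF (x : R) : is_derive x 1 F (gauss_fun x) by apply: is_derive_quotient; exact: dF.
have cF (x : R) : {for x, continuous F}.
  by apply/differentiable_continuous/derivable1_diffP; have [] := dF x.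
rewrite /gauss_integral_proof.integral0_gauss /Rintegral.
rewrite (@continuous_FTC2 R gauss_fun F 0 y y_gt0).
- by rewrite F0 -EFinB subr0.
- by apply: continuous_subspaceT; exact: continuous_gauss_fun.
- split; first by move=> x _; have [] := dF x.
  + exact: cvg_at_right_filter (cF 0).
  + exact: cvg_at_left_filter (cF y).
- by move=> x _; rewrite derive1E; have [] := dF x.
Qed.

End realType.

Lemma exp_msqr_primitive_sqr_cvg (F : R -> R) :
  F 0 = 0 -> (forall x, derivable_pt_lim F x (exp (- x ^ 2))%coqR) ->
  forall eps, (0 < eps)%coqR -> exists M, forall y, (M < y)%coqR ->
    (Rabs (F y ^ 2 - PI / 4) < eps)%coqR.
Proof.
move=> F0 dF eps /RltP eps_gt0.
have {}dF x e : 0 < e -> exists2 d, 0 < d & forall h, h != 0 -> `|h| < d ->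
    `|(F (x + h) - F x) / h - gauss_fun x| < e.
  move=> /RltP e_gt0; have [[d d_gt0] Hd] := dF x e e_gt0.
  exists d; first exact/RltP.
  move=> h /eqP h_neq0 /RltP hd; apply/RltP.
  by have := Hd h h_neq0 hd; rewrite RexpE RpowE.
have /cvgrPdist_lt/(_ eps eps_gt0) [M [_ HM]] :=
  @gauss_integral_proof.cvg_integral0_gauss_sqr R.
exists (Rmax M 0) => y /RltP My.
have y_gt0 : 0 < y by apply: le_lt_trans My; apply/RleP; exact: Rmax_r.
have {}My : M < y by apply: le_lt_trans My; apply/RleP; exact: Rmax_l.
have -> := @integral0_gauss_eq R F F0 dF y y_gt0.
apply/RltP; rewrite RpowE RPIE RabsE RminusE distrC.
by rewrite (_ : 4%coqR = 4) ?IZRposE ?INRE //; exact: HM.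
Qed.

End Gauss.

(* With [c = sqrt 2] and [c = - sqrt 2], [y |-> Phi (c y) / c] is the primitive of
   [exp (- y ^ 2)] vanishing at [0], whose square tends to [PI / 4]. *)
Lemma Phi_scaled_sqr_cvg c : c * c = 2 -> forall eps, 0 < eps ->
  exists M, forall y, M < y -> Rabs (Phi (c * y) ^ 2 - PI / 2) < eps.
Proof.
intros Hc eps eps_pos.
assert (c_neq0 : c <> 0) by (intros ->; lra).
assert (F0 : Phi (c * 0) / c = 0) by (rewrite Rmult_0_r, Phi_0; field; auto).
assert (dF : forall x, derivable_pt_lim (fun y => Phi (c * y) / c) x (exp (- x ^ 2))).
{ intros x. rewrite <- (gauss_kernel_scaled c x Hc).
  replace (gauss_kernel (c * x)) with (gauss_kernel (c * x) * c * / c) by (field; auto).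
  apply derivable_pt_lim_scal_right.
  pose proof (derivable_pt_lim_scal id c x 1 (derivable_pt_lim_id x)) as dlin.
  rewrite Rmult_1_r in dlin.
  apply (derivable_pt_lim_comp (fun y => c * y) Phi x c _ dlin), Phi_derive. }
destruct (Gauss.exp_msqr_primitive_sqr_cvg _ F0 dF (eps / 2)) as [M HM]; [lra|].
exists M. intros y Hy. specialize (HM y Hy).
replace ((Phi (c * y) / c) ^ 2) with (Phi (c * y) ^ 2 / (c * c)) in HM
  by (field; auto).
rewrite Hc in HM. apply Rabs_def2 in HM. apply Rabs_def1; lra.
Qed.

Definition K := sqrt (PI / 2).

Lemma K_pos : 0 < K.
Proof. apply sqrt_lt_R0. pose proof PI_RGT_0. lra. Qed.

Lemma K_sqr : K * K = PI / 2.
Proof. apply sqrt_sqrt. pose proof PI_RGT_0. lra. Qed.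

Lemma Rabs_minus_lt_of_sqr a b e : 0 <= a -> 0 < b ->
  Rabs (a * a - b * b) < e * b -> Rabs (a - b) < e.
Proof.
intros a_ge0 b_pos H.
replace (a * a - b * b) with ((a - b) * (a + b)) in H by ring.
rewrite Rabs_mult, (Rabs_right (a + b)) in H by lra.
apply Rmult_lt_reg_r with b; [exact b_pos|].
apply Rle_lt_trans with (2 := H), Rmult_le_compat_l; [apply Rabs_pos | lra].
Qed.

Lemma Phi_cvg eps : 0 < eps -> exists M, forall z, M < z ->
  Rabs (Phi z - K) < eps /\ Rabs (Phi (- z) + K) < eps.
Proof.
intros eps_pos. pose proof K_pos as K_pos.
assert (s2_pos : 0 < sqrt 2) by (apply sqrt_lt_R0; lra).
assert (s2_sqr : sqrt 2 * sqrt 2 = 2) by (apply sqrt_sqrt; lra).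
assert (eK : 0 < eps * K) by (apply Rmult_lt_0_compat; lra).
destruct (Phi_scaled_sqr_cvg (sqrt 2) s2_sqr _ eK) as [M1 H1].
destruct (Phi_scaled_sqr_cvg (- sqrt 2) ltac:(lra) _ eK) as [M2 H2].
exists (sqrt 2 * Rmax 0 (Rmax M1 M2)). intros z Hz.
assert (Hy : Rmax 0 (Rmax M1 M2) < z / sqrt 2).
{ apply Rmult_lt_reg_l with (sqrt 2); [exact s2_pos|].
  replace (sqrt 2 * (z / sqrt 2)) with z by (field; lra). exact Hz. }
pose proof (Rmax_l 0 (Rmax M1 M2)). pose proof (Rmax_r 0 (Rmax M1 M2)).
pose proof (Rmax_l M1 M2). pose proof (Rmax_r M1 M2).
specialize (H1 (z / sqrt 2) ltac:(lra)). specialize (H2 (z / sqrt 2) ltac:(lra)).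
replace (sqrt 2 * (z / sqrt 2)) with z in H1 by (field; lra).
replace (- sqrt 2 * (z / sqrt 2)) with (- z) in H2 by (field; lra).
assert (0 <= z) by (pose proof (Rmult_le_pos (sqrt 2) (Rmax 0 (Rmax M1 M2))); lra).
assert (Phi 0 <= Phi z) by (apply Phi_incr; lra).
assert (Phi (- z) <= Phi 0) by (apply Phi_incr; lra).
rewrite Phi_0 in *. rewrite <- K_sqr in H1, H2. simpl in H1, H2. split.
- apply Rabs_minus_lt_of_sqr; [lra | exact K_pos | now rewrite Rmult_1_r in H1].
- replace (Phi (- z) + K) with (- (- Phi (- z) - K)) by ring. rewrite Rabs_Ropp.
  apply Rabs_minus_lt_of_sqr; [lra | exact K_pos |].
  rewrite Rmult_1_r in H2.
  replace (- Phi (- z) * - Phi (- z)) with (Phi (- z) * Phi (- z)) by ring. exact H2.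
Qed.

Lemma improper_lim_unique f x l1 l2 :
  improper_lim f x l1 -> improper_lim f x l2 -> l1 = l2.
Proof.
intros H1 H2. apply Rle_antisym; apply Rle_plus_epsilon; intros eps eps_pos;
  destruct (H1 (eps / 2)) as [b1 Hb1]; try lra;
  destruct (H2 (eps / 2)) as [b2 Hb2]; try lra;
  specialize (Hb1 (Rmax b1 b2) (Rmax_l _ _)); specialize (Hb2 (Rmax b1 b2) (Rmax_r _ _));
  apply Rabs_def2 in Hb1; apply Rabs_def2 in Hb2; lra.
Qed.

Lemma improper_lim_gauss x : improper_lim gauss_kernel x (K - Phi x).
Proof.
intros eps eps_pos. destruct (Phi_cvg eps eps_pos) as [M HM].
exists (M + 1). intros b Hb. rewrite RInt_gauss.
replace (Phi b - Phi x - (K - Phi x)) with (Phi b - K) by ring.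
apply HM. lra.
Qed.

Lemma Qfun_Phi x : Qfun x = (K - Phi x) / (2 * K).
Proof.
pose proof K_pos. unfold Qfun. fold gauss_kernel.
assert (sqrt (2 * PI) = 2 * K) as ->.
{ apply sqrt_lem_1; [pose proof PI_RGT_0; lra | lra |].
  replace (2 * K * (2 * K)) with (4 * (K * K)) by ring. rewrite K_sqr. field. }
rewrite (improper_lim_unique _ _ _ _ (epsilon_spec (inhabits 0) (improper_lim gauss_kernel x)
  (ex_intro _ _ (improper_lim_gauss x))) (improper_lim_gauss x)).
unfold Rdiv. ring.
Qed.

Lemma Phi_ge_oppK x : - K <= Phi x.
Proof.
apply Rle_plus_epsilon. intros eps eps_pos.
destruct (Phi_cvg eps eps_pos) as [M HM].
set (z := Rmax (M + 1) (- x)).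
destruct (HM z) as [_ Hz]; [unfold z; pose proof (Rmax_l (M + 1) (- x)); lra|].
assert (Phi (- z) <= Phi x)
  by (apply Phi_incr; unfold z; pose proof (Rmax_r (M + 1) (- x)); lra).
apply Rabs_def2 in Hz. lra.
Qed.

Lemma Qfun_cont x : continuity_pt Qfun x.
Proof.
apply (continuity_pt_locally_ext (fun y => (K - Phi y) / (2 * K)) Qfun 1 x); [lra | |].
- intros y _. symmetry. apply Qfun_Phi.
- pose proof K_pos. apply continuity_pt_div.
  + apply continuity_pt_minus; [apply continuity_pt_const; intros ? ?; reflexivity|].
    apply derivable_continuous_pt. exists (gauss_kernel x). apply Phi_derive.
  + apply continuity_pt_const. intros ? ?; reflexivity.
  + lra.
Qed.

Lemma Qfun_decr a b : a <= b -> Qfun b <= Qfun a.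
Proof.
intros ab. pose proof K_pos. rewrite !Qfun_Phi.
pose proof (Phi_incr a b ab).
apply Rmult_le_compat_r; [left; apply Rinv_0_lt_compat; lra | lra].
Qed.

Lemma Qfun_le1 x : Qfun x <= 1.
Proof.
pose proof K_pos. pose proof (Phi_ge_oppK x). rewrite Qfun_Phi.
apply Rmult_le_reg_r with (2 * K); [lra|].
unfold Rdiv. rewrite Rmult_assoc, Rinv_l by lra. lra.
Qed.

Lemma Qfun_cvg_minfty eps : 0 < eps -> exists M, forall x, x < - M -> 1 - eps < Qfun x.
Proof.
intros eps_pos. pose proof K_pos.
destruct (Phi_cvg (2 * K * eps)) as [M HM]; [apply Rmult_lt_0_compat; lra|].
exists M. intros x Hx.
destruct (HM (- x)) as [_ HPhi]; [lra|]. rewrite Ropp_involutive in HPhi.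
apply Rabs_def2 in HPhi. rewrite Qfun_Phi.
apply Rmult_lt_reg_r with (2 * K); [lra|].
unfold Rdiv. rewrite Rmult_assoc, Rinv_l by lra. lra.
Qed.

Section Qcum.
Variable B : R.
Hypothesis B_pos : 0 < B.

Definition Qcum_arg S := (S - B * ln 2) / sqrt (2 * S).

Lemma Bln2_pos : 0 < B * ln 2.
Proof. apply Rmult_lt_0_compat; [exact B_pos | rewrite <- ln_1; apply ln_increasing; lra]. Qed.

Lemma Qcum_nonpos S : S <= 0 -> Qcum B S = 1.
Proof. intros. unfold Qcum. destruct (Rle_dec S 0); [reflexivity | lra]. Qed.

Lemma Qcum_pos S : 0 < S -> Qcum B S = Qfun (Qcum_arg S).
Proof. intros. unfold Qcum. destruct (Rle_dec S 0); [lra | reflexivity]. Qed.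

Lemma Qcum_0 : Qcum B 0 = 1.
Proof. apply Qcum_nonpos, Rle_refl. Qed.

Lemma Qcum_le1 S : Qcum B S <= 1.
Proof. unfold Qcum. destruct (Rle_dec S 0); [lra | apply Qfun_le1]. Qed.

(* With [u = sqrt a], [v = sqrt b] the claim reads [(v - u) (u v + B ln 2) >= 0]. *)
Lemma Qcum_arg_incr a b : 0 < a -> a <= b -> Qcum_arg a <= Qcum_arg b.
Proof.
intros a_pos ab. pose proof Bln2_pos as c_pos. unfold Qcum_arg.
set (c := B * ln 2) in *.
rewrite !sqrt_mult by lra.
assert (s2_pos : 0 < sqrt 2) by (apply sqrt_lt_R0; lra).
set (u := sqrt a). set (v := sqrt b).
assert (u_pos : 0 < u) by (apply sqrt_lt_R0; lra).
assert (uv : u <= v) by (apply sqrt_le_1_alt; lra).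
assert (u2 : u * u = a) by (apply sqrt_sqrt; lra).
assert (v2 : v * v = b) by (apply sqrt_sqrt; lra).
rewrite <- u2, <- v2.
unfold Rdiv. apply Rmult_le_reg_r with (sqrt 2 * u * v); [apply Rmult_lt_0_compat; nra|].
replace ((u * u - c) * / (sqrt 2 * u) * (sqrt 2 * u * v)) with ((u * u - c) * v)
  by (field; lra).
replace ((v * v - c) * / (sqrt 2 * v) * (sqrt 2 * u * v)) with ((v * v - c) * u)
  by (field; lra).
assert (0 <= (v - u) * (u * v + c)) by (apply Rmult_le_pos; nra).
nra.
Qed.

Lemma Qcum_decr a b : a <= b -> Qcum B b <= Qcum B a.
Proof.
intros ab. destruct (Rle_dec a 0) as [a_le0 | a_pos].
- rewrite (Qcum_nonpos a a_le0). apply Qcum_le1.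
- rewrite !Qcum_pos by lra. apply Qfun_decr, Qcum_arg_incr; lra.
Qed.

Lemma Qcum_arg_cont S : 0 < S -> continuity_pt Qcum_arg S.
Proof. intros. unfold Qcum_arg. reg; [lra | apply Rgt_not_eq, sqrt_lt_R0; lra]. Qed.

(* For [S < B ln 2 / 2] the numerator is below [- B ln 2 / 2], and the denominator
   [sqrt (2 S)] is below [B ln 2 / (2 M)] once [8 M^2 S < (B ln 2)^2]. *)
Lemma Qcum_arg_cvg_0 M : 0 < M -> exists d, 0 < d /\ forall S, 0 < S < d -> Qcum_arg S < - M.
Proof.
intros M_pos. pose proof Bln2_pos as c_pos. unfold Qcum_arg.
set (c := B * ln 2) in *.
exists (Rmin (c / 2) (c * c / (8 * (M * M)))). split.
{ apply Rmin_pos; [lra | apply Rdiv_lt_0_compat; nra]. }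
intros S [S_pos Sd].
pose proof (Rmin_l (c / 2) (c * c / (8 * (M * M)))).
pose proof (Rmin_r (c / 2) (c * c / (8 * (M * M)))).
set (t := sqrt (2 * S)).
assert (t_pos : 0 < t) by (apply sqrt_lt_R0; lra).
assert (t2 : t * t = 2 * S) by (apply sqrt_sqrt; lra).
assert (HS : 8 * (M * M) * S < c * c).
{ apply Rmult_lt_reg_r with (/ (8 * (M * M))); [apply Rinv_0_lt_compat; nra|].
  replace (8 * (M * M) * S * / (8 * (M * M))) with S by (field; lra). lra. }
assert (Ht : 2 * M * t < c).
{ apply Rsqr_incrst_0; [unfold Rsqr; nra | nra | lra]. }
apply Rmult_lt_reg_r with t; [exact t_pos|].
unfold Rdiv. rewrite Rmult_assoc, Rinv_l by lra. lra.
Qed.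

Lemma Qcum_cont S : continuity_pt (Qcum B) S.
Proof.
destruct (Rtotal_order S 0) as [S_neg | [-> | S_pos]].
- apply (continuity_pt_locally_ext (fun _ => 1) _ (- S)); [lra | |].
  + intros y Hy. unfold Rdist in Hy. apply Rabs_def2 in Hy.
    symmetry. apply Qcum_nonpos. lra.
  + apply continuity_pt_const. intros ? ?; reflexivity.
- intros eps eps_pos.
  destruct (Qfun_cvg_minfty eps eps_pos) as [M HM].
  destruct (Qcum_arg_cvg_0 (Rmax M 1)) as [d [d_pos Hd]];
    [pose proof (Rmax_r M 1); lra|].
  exists d. split; [exact d_pos|]. intros y [_ Hy].
  simpl in Hy |- *. unfold R_dist in Hy |- *. rewrite Qcum_0, Rminus_0_r in *.
  apply Rabs_def2 in Hy.
  destruct (Rle_dec y 0) as [y_le0 | y_pos].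
  + rewrite Qcum_nonpos, Rminus_diag, Rabs_R0 by exact y_le0. exact eps_pos.
  + rewrite Qcum_pos by lra.
    pose proof (Rmax_l M 1). pose proof (Hd y ltac:(lra)).
    pose proof (HM (Qcum_arg y) ltac:(lra)). pose proof (Qfun_le1 (Qcum_arg y)).
    rewrite Rabs_left1 by lra. lra.
- apply (continuity_pt_locally_ext (fun y => Qfun (Qcum_arg y)) _ S); [exact S_pos | |].
  + intros y Hy. unfold Rdist in Hy. apply Rabs_def2 in Hy.
    symmetry. apply Qcum_pos. lra.
  + apply (continuity_pt_comp Qcum_arg Qfun), Qfun_cont. apply Qcum_arg_cont, S_pos.
Qed.

End Qcum.

Definition left_sum (f : R -> R) (E : nat -> R) (k : nat) : R :=
  rsum (fun m => f (rsum E (m - 1)) * E m) k.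

Lemma rsum_const h k : rsum (fun _ => h) k = INR k * h.
Proof. induction k as [|k IH]; simpl rsum; [simpl; ring | rewrite IH, S_INR; ring]. Qed.

Section LeftSum.
Variable f : R -> R.
Hypothesis f_cont : forall x, continuity_pt f x.
Hypothesis f_decr : forall a b, a <= b -> f b <= f a.

Lemma RInt_le_left_sum E k : (forall i, (1 <= i <= k)%nat -> 0 <= E i) ->
  RInt f 0 (rsum E k) <= left_sum f E k.
Proof.
unfold left_sum. induction k as [|k IH]; intros E_ge0; simpl rsum.
- rewrite RInt_point by exact f_cont. lra.
- rewrite Nat.sub_0_r, <- (RInt_Chasles f f_cont 0 (rsum E k)).
  assert (Ek : 0 <= E (S k)) by (apply E_ge0; lia).
  specialize (IH (fun i Hi => E_ge0 i ltac:(lia))).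
  destruct (RInt_const_bound f f_cont (rsum E k) (rsum E k + E (S k))
              (f (rsum E k + E (S k))) (f (rsum E k))) as [_ Hb]; [lra | |].
  + intros x Hx. split; apply f_decr; lra.
  + replace (rsum E k + E (S k) - rsum E k) with (E (S k)) in Hb by ring. lra.
Qed.

(* The overshoot on each step [[(m-1) h, m h]] is at most [h (f ((m-1) h) - f (m h))];
   these telescope. *)
Lemma uniform_left_sum_le h k : 0 <= h ->
  left_sum f (fun _ => h) k <= RInt f 0 (INR k * h) + h * (f 0 - f (INR k * h)).
Proof.
unfold left_sum. intros h_ge0. induction k as [|k IH]; simpl rsum.
- rewrite Rmult_0_l, RInt_point by exact f_cont. lra.
- rewrite Nat.sub_0_r, rsum_const, S_INR, <- (RInt_Chasles f f_cont 0 (INR k * h)).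
  destruct (RInt_const_bound f f_cont (INR k * h) ((INR k + 1) * h)
              (f ((INR k + 1) * h)) (f (INR k * h))) as [Hb _]; [nra | |].
  + intros x Hx. split; apply f_decr; lra.
  + replace ((INR k + 1) * h - INR k * h) with h in Hb by ring. nra.
Qed.

End LeftSum.

Module Simplex.
Import all_boot all_order all_algebra all_classical all_reals all_analysis.
Import Rstruct Rstruct_topology.
Import Order.TTheory GRing.Theory Num.Theory numFieldNormedType.Exports.
Local Open Scope classical_set_scope.
Local Open Scope ring_scope.

Section realType.
Context {R : realType}.

Definition prefix_cost (f : R -> R) {n} (w : 'I_n -> R) :=
  \sum_(i < n) f (\sum_(j < n | (j < i)%N) w j) * w i.

Lemma continuous_coord_sum n (P : pred 'I_n) :
  continuous (fun v : 'rV[R]_n => \sum_(i | P i) v ord0 i).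
Proof.
by apply: continuous_big => [|i _]; [exact: add_continuous | exact: coord_continuous].
Qed.

Definition simplex n (T : R) :=
  [set v : 'rV[R]_n | (forall i, 0 <= v ord0 i) /\ \sum_i v ord0 i = T].

Lemma simplex_compact n T : compact (simplex n T).
Proof.
pose box := [set v : 'rV[R]_n | forall i, (fun=> `[0, T]%classic) i (v ord0 i)].
have box_compact : compact box by apply: rV_compact => _; exact: segment_compact.
apply: (subclosed_compact _ box_compact).
- have -> : simplex n T = \bigcap_(i in setT) [set v : 'rV[R]_n | 0 <= v ord0 i] `&`
      [set v | \sum_i v ord0 i = T].
    apply/seteqP; split => v /= [v_ge0 vT]; split => // i; last exact: v_ge0.
    by move=> _; exact: v_ge0.
  apply: closedI.
    apply: closed_bigI => i _.
    exact: (continuous_closedP _).1 (@coord_continuous R 1 n ord0 i) _ (@closed_ge R 0).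
  exact: (continuous_closedP _).1 (continuous_coord_sum _ _) _ (@closed_eq R T).
- move=> v [v_ge0 vT] i /=; rewrite in_itv /= v_ge0 /= -vT.
  by rewrite (bigD1 i) //= lerDl; apply: sumr_ge0 => j _; exact: v_ge0.
Qed.

Lemma simplex_neq0 n T : 0 <= T -> simplex n.+1 T !=set0.
Proof.
move=> T_ge0; exists (\row_j (if j == ord0 then T else 0)); split.
  by move=> i; rewrite mxE; case: ifP.
rewrite (bigD1 ord0) //= mxE eqxx big1 ?addr0 // => i /negbTE i_neq0.
by rewrite mxE i_neq0.
Qed.

Lemma prefix_cost_argmin (f : R -> R) n (T : R) : 0 <= T -> continuous f ->
  exists v : 'I_n.+1 -> R, [/\ (forall i, 0 <= v i), \sum_i v i = T &
    forall w : 'I_n.+1 -> R, (forall i, 0 <= w i) -> \sum_i w i = T ->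
      prefix_cost f v <= prefix_cost f w].
Proof.
move=> T_ge0 f_cont.
pose J (v : 'rV[R]_n.+1) := prefix_cost f (fun i => v ord0 i).
have J_cont : {within simplex n.+1 T, continuous J}.
  apply: continuous_subspaceT; apply: continuous_big => [|i _ v].
    exact: add_continuous.
  apply: continuousM; last exact: coord_continuous.
  exact: continuous_comp (continuous_coord_sum _ _ _) (f_cont _).
have [c /set_mem [c_ge0 cT] c_min] :=
  EVT_min_rV (simplex_neq0 n T T_ge0) (simplex_compact n.+1 T) J_cont.
exists (fun i => c ord0 i); split => // w w_ge0 wT.
have := c_min (\row_j w j); rewrite /J.
have -> : (fun i => (\row_j w j) ord0 i) = w by apply/funext => i; rewrite mxE.
apply; apply/mem_set; split; first by move=> i; rewrite mxE.
by under eq_bigr do rewrite mxE.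
Qed.

End realType.

Lemma rsumE (E : nat -> R) k : rsum E k = \sum_(i < k) E i.+1.
Proof. by elim: k => [|k IH]; rewrite ?big_ord0 // big_ord_recr /= IH. Qed.

Lemma left_sum_prefix_cost (f : R -> R) E k :
  left_sum f E k = prefix_cost f (fun i : 'I_k => E i.+1).
Proof.
rewrite /left_sum rsumE /prefix_cost; apply: eq_bigr => i _.
rewrite /= Nat.sub_0_r rsumE (big_ord_widen k (fun j => E j.+1)) //.
exact: ltnW.
Qed.

Lemma left_sum_argmin (f : R -> R) n (T : R) : (0 <= T)%coqR ->
  (forall x, continuity_pt f x) ->
  exists E, feasible n.+1 T E /\
    forall E', feasible n.+1 T E' -> (left_sum f E n.+1 <= left_sum f E' n.+1)%coqR.
Proof.
move=> /RleP T_ge0 f_cont.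
have {}f_cont : continuous f by move=> x; exact/continuity_ptE.
have [v [v_ge0 vT v_min]] := @prefix_cost_argmin R f n T T_ge0 f_cont.
pose E i := if (0 < i <= n.+1)%N then v (inord i.-1) else 0.
have Ev : (fun i : 'I_n.+1 => E i.+1) = v.
  by apply/funext => i; rewrite /E /= ltn_ord; congr v; apply: val_inj; exact: inordK.
exists E; split.
  split; last by rewrite rsumE -vT -Ev.
  by move=> i _; rewrite /E; case: ifP => _; [exact/RleP | exact: Rle_refl].
move=> E' [E'_ge0 E'T]; apply/RleP; rewrite !left_sum_prefix_cost Ev.
apply: v_min; last by rewrite -rsumE.
by move=> i; apply/RleP; apply: E'_ge0; split; apply/ssrnat.leP.
Qed.

End Simplex.

Definition is_min_left_sum (f : R -> R) (M : nat) (T v : R) : Prop :=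
  (exists E, feasible M T E /\ left_sum f E M = v) /\
  (forall E, feasible M T E -> v <= left_sum f E M).

Lemma Un_cv_harmonic_bound (u : nat -> R) l C :
  (forall n, Rabs (u (S n) - l) <= C / INR (S n)) -> Un_cv u l.
Proof.
intros Hu eps eps_pos.
destruct (INR_archimed eps C eps_pos) as [N HN].
exists (S N). intros n Hn. destruct n as [|n]; [lia|].
assert (INR N < INR (S n)) by (apply lt_INR; lia).
assert (0 < INR (S n)) by (apply lt_0_INR; lia).
assert (C / INR (S n) < eps).
{ apply Rmult_lt_reg_r with (INR (S n)); [lra|].
  unfold Rdiv. rewrite Rmult_assoc, Rinv_l by lra. nra. }
pose proof (Hu n). unfold R_dist. lra.
Qed.

Section MinLeftSum.
Variable f : R -> R.
Hypothesis f_cont : forall x, continuity_pt f x.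
Hypothesis f_decr : forall a b, a <= b -> f b <= f a.
Variable T : R.
Hypothesis T_ge0 : 0 <= T.

(* Every allocation costs at least the integral, and the uniform one at most
   [T (f 0 - f T) / M] more. *)
Lemma min_left_sum_bound n v : is_min_left_sum f (S n) T v ->
  Rabs (v - RInt f 0 T) <= T * (f 0 - f T) / INR (S n).
Proof.
intros [[E [[E_ge0 ET] <-]] E_min].
assert (n_pos : 0 < INR (S n)) by (apply lt_0_INR; lia).
set (h := T / INR (S n)).
assert (h_ge0 : 0 <= h) by (apply Rmult_le_pos; [lra | left; apply Rinv_0_lt_compat; lra]).
assert (hT : INR (S n) * h = T) by (unfold h; field; lra).
pose proof (RInt_le_left_sum f f_cont f_decr E (S n) E_ge0) as lower.
assert (upper := E_min (fun _ => h) (conj (fun _ _ => h_ge0) (eq_trans (rsum_const h _) hT))).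
pose proof (uniform_left_sum_le f f_cont f_decr h (S n) h_ge0) as uniform.
rewrite ET in lower. rewrite hT in uniform.
replace (T * (f 0 - f T) / INR (S n)) with (h * (f 0 - f T)) by (unfold h; field; lra).
apply Rabs_le. lra.
Qed.

Lemma min_left_sum_cvg (v : nat -> R) :
  (forall n, is_min_left_sum f (S n) T (v (S n))) -> Un_cv v (RInt f 0 T).
Proof.
intros v_min. apply (Un_cv_harmonic_bound _ _ (T * (f 0 - f T))).
intros n. apply min_left_sum_bound, v_min.
Qed.

End MinLeftSum.

Lemma avg_energy_left_sum B n E :
  avg_energy B (S n) E = left_sum (Qcum B) E (S n).
Proof.
unfold avg_energy, left_sum. induction n as [|n IH].
- simpl. rewrite Qcum_0. ring.
- simpl rsum in *. rewrite <- Rplus_assoc, IH. reflexivity.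
Qed.

Lemma Einf_ge0 B Trel : 0 <= Einf B Trel.
Proof.
unfold Einf. apply Rmult_le_pos; [|apply pow2_ge_0].
pose proof (pow2_ge_0 (Qinv (1 - Trel))). lra.
Qed.

Lemma Eas_is_min B Trel n : 0 < B ->
  is_min_left_sum (Qcum B) (S n) (Einf B Trel) (Eas (S n) B Trel).
Proof.
intros B_pos.
destruct (Simplex.left_sum_argmin (Qcum B) n (Einf B Trel) (Einf_ge0 B Trel)
            (Qcum_cont B B_pos)) as [E [E_feas E_min]].
unfold Eas. destruct (epsilon_spec (inhabits 0) (fun v =>
    (exists E, feasible (S n) (Einf B Trel) E /\ avg_energy B (S n) E = v) /\
    (forall E, feasible (S n) (Einf B Trel) E -> v <= avg_energy B (S n) E)))
  as [[E' [E'_feas <-]] E'_min].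
- exists (avg_energy B (S n) E). split; [now exists E|].
  intros E'. rewrite !avg_energy_left_sum. apply E_min.
- split; [exists E'; split; [exact E'_feas | symmetry; apply avg_energy_left_sum]|].
  intros E'' E''_feas. rewrite <- !avg_energy_left_sum. apply E'_min, E''_feas.
Qed.

Theorem mainTheorem7 (B Trel : R) (hB : 0 < B) (hT : 0 < Trel < 1) :
  Un_cv (fun M : nat => Eas M B Trel) (RInt (fun E => Qcum B E) 0 (Einf B Trel)).
Proof.
apply min_left_sum_cvg.
- exact (Qcum_cont B hB).
- exact (Qcum_decr B hB).
- apply Einf_ge0.
- intros n. exact (Eas_is_min B Trel n hB).
Qed.
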